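(* Let $\mathbb{F}_q$ be a finite field, $n\ge 1$, and let $C\le \mathbb{F}_q^n$ be a linear code which is an abelian group code. Let $G$ be a regular subgroup of the symmetric group $S_n$ such that $\langle G, C_{S_n}(G)\rangle \le \mathrm{PAut}(C)$, and such that $C$ is permutation equivalent to some ideal $I$ of the group algebra $\mathbb{F}_q[G]$ on which the derived subgroup $G'$ acts trivially from the left (respectively, on which $G'$ acts trivially from the right). If $G'\neq\{1\}$, then $C$ is a $|G'|$-divisible code and $|G'|$ divides $w(C)$.
   Context: All groups are finite. $\mathcal{B}=\{e_1,\dots,e_n\}$ is the standard basis of $\mathbb{F}_q^n$. A permutation $\sigma\in S_n$ acts on $\mathbb{F}_q^n$ by $\sigma(\sum a_ie_i)=\sum a_i e_{\sigma(i)}$, and $\mathrm{PAut}(C)=\{\sigma\in S_n:\sigma(C)=C\}$. A subgroup of $S_n$ is regular if it has order $n$ and acts transitively on $\{1,\dots,n\}$. $C_{S_n}(G)$ is the centralizer of $G$ in $S_n$. For a group $H$ of order $n$, a linear code $C\le\mathbb{F}_q^n$ is an $H$-code if there is a bijection $\phi:\mathcal{B}\to H$ whose $\mathbb{F}_q$-linear extension $\tilde\phi:\mathbb{F}_q^n\to\mathbb{F}_q[H]$ maps $C$ onto a two-sided ideal of $\mathbb{F}_q[H]$; $C$ is an abelian group code if it is an $H$-code for some abelian group $H$. $C$ is permutation equivalent to an ideal $I$ of $\mathbb{F}_q[G]$ if there is a bijection $\phi:\mathcal{B}\to G$ with $\tilde\phi(C)=I$. A subgroup $U\le G$ acts trivially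 from the left (right) on $X\subseteq\mathbb{F}_q[G]$ if $ux=x$ (resp. $xu=x$) for all $u\in U$, $x\in X$. For $c\in\mathbb{F}_q^n$, $w_H(c)$ is the number of nonzero coordinates of $c$; for an integer $\Delta>1$, $C$ is $\Delta$-divisible if $\Delta\mid w_H(c)$ for all $c\in C$; $w(C)=\min\{w_H(c):0\ne c\in C\}$. *)

From HB Require Import structures.
From mathcomp Require Import all_boot all_order all_algebra all_fingroup all_solvable all_field.
Set Implicit Arguments. Unset Strict Implicit. Unset Printing Implicit Defensive.
Import GRing.Theory.
Local Open Scope ring_scope.

Section Codes.
Variables (F : finFieldType) (n : nat).

Definition wH (c : 'rV[F]_n) : nat := #|[set i : 'I_n | c 0 i != 0]|.

Definition divisible_code (D : nat) (C : {vspace 'rV[F]_n}) : Prop :=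
  (1 < D)%N /\ forall c, c \in C -> (D %| wH c)%N.

(* minimum weight; convention: 0 for the zero code *)
Definition minw (C : {vspace 'rV[F]_n}) : nat :=
  if [pick c | (c \in C) && (c != 0)] is Some c0 then
    wH [arg min_(c < c0 | (c \in C) && (c != 0)) wH c]
  else 0%N.

(* action of sigma : sigma (sum a_i e_i) = sum a_i e_{sigma i} *)
Definition permv (s : {perm 'I_n}) (c : 'rV[F]_n) : 'rV[F]_n :=
  \row_j c 0 ((s^-1)%g j).

Definition PAut (C : {vspace 'rV[F]_n}) : {set {perm 'I_n}} :=
  [set s : {perm 'I_n} | [forall d : 'rV[F]_n,
      (d \in C) == [exists c : 'rV[F]_n, (c \in C) && (permv s c == d)]]].

(* group algebra F[H], elements as finitely supported functions gT -> F
   with support in H *)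
Variable gT : finGroupType.

Definition in_galg (H : {group gT}) (a : {ffun gT -> F}) : Prop :=
  forall x, x \notin H -> a x = 0.

Definition galg_mul (H : {group gT}) (a b : {ffun gT -> F}) : {ffun gT -> F} :=
  [ffun x => \sum_(y in H) a y * b ((y^-1)%g * x)%g].

Definition galg_elt (g : gT) : {ffun gT -> F} := [ffun x => (x == g)%:R].

Definition is_ideal (H : {group gT}) (I : {set {ffun gT -> F}}) : Prop :=
  [/\ forall x, x \in I -> in_galg H x,
      0 \in I,
      forall x y, x \in I -> y \in I -> x + y \in I,
      forall x, x \in I -> - x \in I &
      forall a x, in_galg H a -> x \in I ->
        galg_mul H a x \in I /\ galg_mul H x a \in I].

(* phi : B -> H is a bijection onto H (basis vector e_i identified with i) *)
Definition bij_onto (H : {group gT}) (phi : 'I_n -> gT) : Prop :=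
  injective phi /\ (forall x, x \in H <-> exists i, phi i = x).

Definition lin_ext (phi : 'I_n -> gT) (c : 'rV[F]_n) : {ffun gT -> F} :=
  [ffun x => \sum_(i | phi i == x) c 0 i].

Definition maps_onto (phi : 'I_n -> gT) (C : {vspace 'rV[F]_n})
    (I : {set {ffun gT -> F}}) : Prop :=
  forall x, x \in I <-> exists2 c, c \in C & lin_ext phi c = x.

Definition is_H_code (H : {group gT}) (C : {vspace 'rV[F]_n}) : Prop :=
  exists phi : 'I_n -> gT, bij_onto H phi /\
    exists I, is_ideal H I /\ maps_onto phi C I.

End Codes.

Definition abelian_group_code (F : finFieldType) (n : nat)
    (C : {vspace 'rV[F]_n}) : Prop :=
  exists (gT : finGroupType) (H : {group gT}),
    abelian H /\ #|H| = n /\ is_H_code H C.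

Definition regular (n : nat) (G : {group {perm 'I_n}}) : Prop :=
  #|G| = n /\ [transitive G, on [set: 'I_n] | 'P].

From HB Require Import structures.
From mathcomp Require Import all_boot all_order all_algebra all_fingroup all_solvable all_field.
Set Implicit Arguments. Unset Strict Implicit. Unset Printing Implicit Defensive.
Import GRing.Theory.
Local Open Scope ring_scope.

(* Transport C to the ideal I of F[G]. If G' fixes every x in I from one side,
   the support of x is stable under multiplication by G' on that side, hence a
   union of cosets of G', so |G'| divides its size, which is the Hamming weight
   of the codeword mapped to x. The minimum weight is the weight of a codeword. *)

Section MulgStable.
Local Open Scope group_scope.
Variables (gT : finGroupType) (K : {group gT}).

(* S is a union of orbits of K under right translation, i.e. of left cosets of K. *)
Lemma card_dvd_mulg_stable_r (S : {set gT}) : S * K \subset S -> (#|K| %| #|S|)%N.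
Proof.
move=> SK_S; have actsKS : [acts K, on S | 'R].
  apply/subsetP=> k Kk; rewrite !inE /=; apply/subsetP=> x Sx; rewrite inE.
  exact: subsetP SK_S _ (mem_mulg Sx Kk).
rewrite -(acts_sum_card_orbit actsKS); apply: dvdn_sum => _ /imsetP[x _ ->].
by rewrite orbitR card_lcoset.
Qed.

Lemma card_dvd_mulg_stable_l (S : {set gT}) : K * S \subset S -> (#|K| %| #|S|)%N.
Proof.
move=> KS_S; rewrite -(card_invg S); apply: card_dvd_mulg_stable_r.
by rewrite -[X in _ * X]invGid -invMg invSg.
Qed.

End MulgStable.

Section GroupAlgebraSupport.
Variables (F : finFieldType) (gT : finGroupType) (G : {group gT}).

Definition galg_supp (a : {ffun gT -> F}) : {set gT} := [set z in G | a z != 0].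

Lemma galg_mul_eltl u a z :
  u \in G -> galg_mul G (galg_elt F u) a z = a (u^-1 * z)%g.
Proof.
move=> Gu; rewrite /galg_mul ffunE (bigD1 u) //= big1 ?addr0.
  by rewrite ffunE eqxx mul1r.
by move=> y /andP[_ /negbTE neq_yu]; rewrite ffunE neq_yu mul0r.
Qed.

Lemma galg_mul_eltr u a s :
  s \in G -> galg_mul G a (galg_elt F u) (s * u)%g = a s.
Proof.
move=> Gs; rewrite /galg_mul ffunE (bigD1 s) //= big1 ?addr0.
  by rewrite ffunE mulgA mulVg mul1g eqxx mulr1.
move=> y /andP[_ neq_ys]; rewrite ffunE.
case: eqP => [ysu_u|]; last by rewrite mulr0.
have /eqP : (y^-1 * s = 1)%g by apply: (mulIg u); rewrite -mulgA ysu_u mul1g.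
by rewrite -eq_mulVg1 (negbTE neq_ys).
Qed.

Lemma card_dvd_galg_supp_fixl (K : {group gT}) a :
  K \subset G -> (forall u, u \in K -> galg_mul G (galg_elt F u) a = a) ->
  (#|K| %| #|galg_supp a|)%N.
Proof.
move=> sKG fixKa; apply: card_dvd_mulg_stable_l.
apply/subsetP=> _ /mulsgP[k s Kk /setIdP[Gs nz_as] ->]; have Gk := subsetP sKG k Kk.
by rewrite inE groupM //= -(fixKa k Kk) galg_mul_eltl // mulKg.
Qed.

Lemma card_dvd_galg_supp_fixr (K : {group gT}) a :
  K \subset G -> (forall u, u \in K -> galg_mul G a (galg_elt F u) = a) ->
  (#|K| %| #|galg_supp a|)%N.
Proof.
move=> sKG fixKa; apply: card_dvd_mulg_stable_r.
apply/subsetP=> _ /mulsgP[s k /setIdP[Gs nz_as] Kk ->]; have Gk := subsetP sKG k Kk.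
by rewrite inE groupM //= -(fixKa k Kk) galg_mul_eltr.
Qed.

End GroupAlgebraSupport.

Section CodesInGroupAlgebra.
Variables (F : finFieldType) (n : nat).

Lemma lin_ext_inj (gT : finGroupType) (phi : 'I_n -> gT) (c : 'rV[F]_n) i :
  injective phi -> lin_ext phi c (phi i) = c 0 i.
Proof.
by move=> inj_phi; rewrite ffunE (big_pred1 i) // => j /=; rewrite inj_eq.
Qed.

Lemma wH_lin_ext (gT : finGroupType) (G : {group gT}) (phi : 'I_n -> gT)
    (c : 'rV[F]_n) :
  bij_onto G phi -> wH c = #|galg_supp G (lin_ext phi c)|.
Proof.
move=> [inj_phi onto_phi]; rewrite /wH -(card_imset _ inj_phi).
apply: eq_card => z; rewrite !inE; apply/imsetP/andP => [[i] | [/onto_phi[i <-]]].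
  by rewrite inE => nz_ci ->; rewrite lin_ext_inj //; split; [apply/onto_phi; exists i|].
by rewrite lin_ext_inj // => nz_ci; exists i; rewrite ?inE.
Qed.

Lemma dvdn_minw (D : nat) (C : {vspace 'rV[F]_n}) :
  (forall c, c \in C -> (D %| wH c)%N) -> (D %| minw C)%N.
Proof.
move=> dvd_wH; rewrite /minw; case: pickP => [c0 C'c0 | _]; last exact: dvdn0.
by case: arg_minnP => // c /andP[Cc _] _; apply: dvd_wH.
Qed.

End CodesInGroupAlgebra.

Theorem theorem1 (F : finFieldType) (n : nat) (C : {vspace 'rV[F]_n})
    (G : {group {perm 'I_n}}) :
  (0 < n)%N ->
  abelian_group_code C ->
  regular G ->
  (G <*> 'C(G) \subset PAut C)%g ->
  (exists (phi : 'I_n -> {perm 'I_n}) (I : {set {ffun {perm 'I_n} -> F}}),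
     [/\ bij_onto G phi, is_ideal G I, maps_onto phi C I &
       ((forall u x, u \in (G^`(1))%g -> x \in I -> galg_mul G (galg_elt F u) x = x)
        \/
        (forall u x, u \in (G^`(1))%g -> x \in I -> galg_mul G x (galg_elt F u) = x))]) ->
  (G^`(1))%g != 1%g ->
  divisible_code #|(G^`(1))%g| C /\ (#|(G^`(1))%g| %| minw C)%N.
Proof.
move=> _ _ _ _ [phi [I [bij_phi _ CI fixI]]] ntG'.
have dvd_wH c : c \in C -> (#|(G^`(1))%g| %| wH c)%N.
  move=> Cc; have Ic : lin_ext phi c \in I by apply/CI; exists c.
  rewrite (wH_lin_ext _ bij_phi).
  case: fixI => fixI; [apply: card_dvd_galg_supp_fixl | apply: card_dvd_galg_supp_fixr];
    by [exact: der_sub | move=> u G'u; exact: fixI].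
split; last exact: dvdn_minw.
by split; first rewrite cardG_gt1.
Qed.
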